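(* Let $G=(V,R,E)$ be a finite bipartite version–record graph, let $\mathbb{T}=(V,\mathbb{E})$ be a version tree on $V$ satisfying the standing assumptions below, and let $\delta\le 1$ be a positive parameter. If every edge $(v_i,v_j)\in\mathbb{E}$ has weight $w(v_i,v_j)>\delta|R|$, then the checkout cost when all versions are placed in one single partition, namely $\mathcal{C}_{avg}=|R|$, satisfies $\mathcal{C}_{avg}<\frac{1}{\delta}\cdot\frac{|E|}{|V|}$.
   Context: Versions $V=\{v_1,\dots,v_n\}$ and records $R$; $(v,r)\in E$ means version $v$ contains record $r$; $R(v)=\{r:(v,r)\in E\}$, and every record lies in some version, so $R=\bigcup_{v\in V}R(v)$. The version tree $\mathbb{T}$ is a rooted tree on vertex set $V$ whose edges go from a parent version to a child version (derivation relation); the weight of an edge is $w(v_i,v_j)=|R(v_i)\cap R(v_j)|$. Standing assumption (no cross-version diff rule): a record of a version that is not contained in its parent is a newly created record, i.e., for every record $r$ the set of versions containing $r$ is a connected subtree of $\mathbb{T}$. If all versions form one partition, the checkout cost of each version is $|R|$, so the average checkout cost is $|R|$. *)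

From mathcomp Require Import all_boot all_order all_algebra.
Set Implicit Arguments. Unset Strict Implicit. Unset Printing Implicit Defensive.

(* Version-record bipartite graph: versions V, records Rec (finite types),
   contains v r <-> (v, r) \in E. *)

Definition recs_of (V Rec : finType) (contains : V -> Rec -> bool) (v : V)
  : {set Rec} := [set r | contains v r].

Definition edge_set (V Rec : finType) (contains : V -> Rec -> bool)
  : {set V * Rec} := [set p | contains p.1 p.2].

Definition weight (V Rec : finType) (contains : V -> Rec -> bool) (u v : V)
  : nat := #|recs_of contains u :&: recs_of contains v|.

(* A rooted tree on V given by its root and parent map: the root is its own
   parent, and every vertex reaches the root by iterating the parent map.
   Tree edges are (parent v, v) for v != root. *)
Definition rooted_tree (V : finType) (root : V) (parent : V -> V) : Prop :=
  parent root = root /\ forall v : V, exists n, iter n parent v = root.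

Definition tree_edge (V : finType) (root : V) (parent : V -> V) (u v : V)
  : bool := (v != root) && (parent v == u).

Definition tree_adj (V : finType) (root : V) (parent : V -> V) : rel V :=
  fun u v => tree_edge root parent u v || tree_edge root parent v u.

Definition records_covered (V Rec : finType) (contains : V -> Rec -> bool)
  : Prop := forall r : Rec, exists v : V, contains v r.

(* Standing assumption (no cross-version diff): for every record r, the set
   of versions containing r induces a connected subtree of the version tree. *)
Definition record_subtrees_connected (V Rec : finType)
  (contains : V -> Rec -> bool) (root : V) (parent : V -> V) : Prop :=
  forall (r : Rec) (x y : V), contains x r -> contains y r ->
    connect (fun a b => [&& tree_adj root parent a b, contains a r
                           & contains b r]) x y.

From mathcomp Require Import all_boot all_order all_algebra.
Set Implicit Arguments.
Unset Strict Implicit.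
Unset Printing Implicit Defensive.

Import Order.TTheory GRing.Theory Num.Theory.
Local Open Scope ring_scope.

(* Every version [v] is an endpoint of some tree edge, and that edge's weight
   is at most [|R(v)|]; so each [|R(v)|] exceeds [delta |R|].  Summing over
   [V] gives [|E| = sum_v |R(v)| > delta |R| |V|]. *)

Lemma card_edge_set (V Rec : finType) (contains : V -> Rec -> bool) :
  #|edge_set contains| = (\sum_v #|recs_of contains v|)%N.
Proof.
rewrite -sum1_card big_mkcond /=.
under [RHS]eq_bigr => v _ do rewrite -sum1_card big_mkcond /=.
rewrite pair_bigA /=; apply: eq_bigr => -[v r] _.
by rewrite /edge_set /recs_of !inE.
Qed.

Section WeightBounds.
Variables (V Rec : finType) (contains : V -> Rec -> bool).

Lemma leq_weightl (u v : V) : (weight contains u v <= #|recs_of contains u|)%N.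
Proof. exact/subset_leq_card/subsetIl. Qed.

Lemma leq_weightr (u v : V) : (weight contains u v <= #|recs_of contains v|)%N.
Proof. exact/subset_leq_card/subsetIr. Qed.

End WeightBounds.

Section RootedTree.
Variables (V : finType) (root : V) (parent : V -> V).
Hypothesis tree : rooted_tree root parent.

Lemma exists_child_of_root (v : V) : v != root ->
  exists2 c, c != root & parent c = root.
Proof.
have [n] := tree.2 v; elim: n v => [|n IHn] v; first by move=> /= ->; rewrite eqxx.
rewrite iterSr => reach_root v_nroot.
have [pv_root|pv_nroot] := eqVneq (parent v) root; first by exists v.
exact: IHn reach_root pv_nroot.
Qed.

Lemma exists_tree_adj (v : V) : (1 < #|V|)%N -> exists u, tree_adj root parent u v.
Proof.
move=> V_gt1; have [->|v_nroot] := eqVneq v root; last first.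
  by exists (parent v); rewrite /tree_adj /tree_edge v_nroot eqxx.
have [x x_nroot] : exists x, x != root.
  apply/existsP; rewrite -negb_forall; apply: contraTN V_gt1 => /forallP all_root.
  rewrite -leqNgt -(cards1 root) subset_leq_card //.
  by apply/subsetP => y _; rewrite inE all_root.
have [c c_nroot pc_root] := exists_child_of_root x_nroot.
by exists c; rewrite /tree_adj /tree_edge c_nroot pc_root eqxx orbT.
Qed.

End RootedTree.

Lemma ltr_scaled_mean (F : realFieldType) (I : finType) (x : I -> F) (c d : F) :
  0 < d -> (0 < #|I|)%N -> (forall i, d * c < x i) ->
  c < d^-1 * ((\sum_i x i) / #|I|%:R).
Proof.
move=> d_gt0 I_gt0 lt_x; have [i0 _] := card_gt0P I_gt0.
have lt_sum : \sum_(i : I) d * c < \sum_i x i.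
  by apply: ltr_sum => //; apply/hasP; exists i0; rewrite ?mem_index_enum.
rewrite sumr_const -/#|I| in lt_sum.
rewrite mulrA ltr_pdivlMr ?ltr0n // mulrC ltr_pdivlMl //.
by rewrite mulrA -mulr_natr mulrAC mul1r mulr_natr.
Qed.

Theorem lemma1 (F : realFieldType) (V Rec : finType)
  (contains : V -> Rec -> bool) (root : V) (parent : V -> V) (delta : F) :
  rooted_tree root parent ->
  records_covered contains ->
  record_subtrees_connected contains root parent ->
  (1 < #|V|)%N ->
  0 < delta -> delta <= 1 ->
  (forall u v : V, tree_edge root parent u v ->
     delta * #|Rec|%:R < (weight contains u v)%:R) ->
  (#|Rec|%:R : F) < delta^-1 * ((#|edge_set contains|)%:R / (#|V|)%:R).
Proof.
move=> tree _ _ V_gt1 delta_gt0 _ heavy.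
rewrite card_edge_set natr_sum.
apply: ltr_scaled_mean => [//||v]; first exact: ltn_trans V_gt1.
have [u /orP[uv|vu]] := exists_tree_adj tree v V_gt1.
- by apply: lt_le_trans (heavy _ _ uv) _; rewrite ler_nat leq_weightr.
- by apply: lt_le_trans (heavy _ _ vu) _; rewrite ler_nat leq_weightl.
Qed.
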